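(* Let $S$ be a specialisation independent scheduling rule. For every clause $c=(h\leftarrow B)$ there exist p-goals $M_s,M_q$ with $B=M_s|M_q$ (depending only on $c$) such that every priority derivation step $a|K\xrightarrow{c\xi,\eta}R$ belonging to $S$ satisfies $R=(M_s\xi\underline{\pi}|K|M_q\xi\underline{\pi})\eta$ for some shifting $\underline{\pi}$. In other words, $S$ is of stack-queue type; together with the fact that complete stack-queue sets are specialisation independent scheduling rules, specialisation independent scheduling rules are exactly the complete sets of stack-queue type.
   Context: A p-atom is a pair $a[p]$ of an atom $a$ and a rational priority $p$. A p-goal is a finite set of p-atoms with pairwise distinct priorities, regarded as a list ordered by increasing priority. Substitutions act on atoms and leave priorities unchanged. A clause is $h\leftarrow B$ with $h$ an atom and $B$ a p-goal. For p-goals with no common priority, $F+G=F\cup G$; $F|G$ denotes $F+G$ when all priorities of $F$ are smaller than those of $G$. A shifting $\underline{\pi}$ is a strictly increasing bijection $\mathbb{Q}\to\mathbb{Q}$ acting on priorities ($G\underline\pi$). Priority derivation step: for a p-goal $a|F$ ($a$ of least priority), clause $c=(h\leftarrow B)$, renaming $\xi$ with $var(a|F)\cap var(c\xi)=\emptyset$, idempotent relevant mgu $\theta$ of $a$ and $h\xi$, shifting $\underline{\pi}$ with $F$, $B\xi\underline{\pi}$ sharing no priority: $a|F\xrightarrow{c\xi,\theta}(F+B\xi\underline{\pi})\theta$. Lowering: for $c=(h\leftarrow B)$, a step $a\lambda\underline{\sigma}|(K\lambda\underline{\sigma}+X)\xrightarrow{c}(X+K\lambda\underline{\sigma}+B\xi''\underline{\theta}'')\alpha''$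 is a lowering by $X$ of a step $a|K\xrightarrow{c}(K+B\xi'\underline{\theta}')\alpha'$ ($\lambda$ a substitution, $\underline\sigma$ a shifting); it is a congruent lowering by $X$ if some shifting $\underline{\rho}$ has $K\underline{\rho}=K\underline{\sigma}$ and $B\underline{\theta}'\underline{\rho}=B\underline{\theta}''$. Steps are congruent lowerings of each other if each is a congruent lowering of the other. A set $S$ of steps is complete if (i) whenever some step $G\xrightarrow{c}\cdot$ exists, some step $G\xrightarrow{c}\cdot$ lies in $S$, and (ii) $S$ contains every step that is a congruent lowering of each other with a step of $S$; it is specialisation independent if whenever $Ds_1,Ds_2\in S$ and $Ds_2$ is a lowering of $Ds_1$ by $X$, $Ds_2$ is a congruent lowering of $Ds_1$ by $X$. A specialisation independent scheduling rule is a complete specialisation independent set of steps. Stack-queue type: a set $SQ$ of priority derivation steps is of stack-queue type if for every clause $c=(h\leftarrow B)$ there are p-goals $M_s,M_q$ with $B=M_s|M_q$ such that every step $a|K\xrightarrow{c\xi,\mu}R$ in $SQ$ satisfies $R=(M_s\xi\underline{\gamma}|K|M_q\xi\underline{\gamma})\mu$ for some shifting $\underline{\gamma}$. *)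

From mathcomp Require Import all_boot all_order all_algebra.
Set Implicit Arguments. Unset Strict Implicit. Unset Printing Implicit Defensive.
Import Order.TTheory GRing.Theory Num.Theory.
Local Open Scope ring_scope.

Section Syntax.
Variables (Fsym Psym : Type).

Inductive term := Var of nat | Fn of Fsym & seq term.

Record atom := Atom { apred : Psym; aargs : seq term }.

Fixpoint tvars (t : term) : seq nat :=
  match t with Var x => [:: x] | Fn _ ts => flatten (map tvars ts) end.

Definition avars (a : atom) : seq nat := flatten (map tvars (aargs a)).

Definition subst := nat -> term.

Fixpoint tsubst (s : subst) (t : term) : term :=
  match t with Var x => s x | Fn f ts => Fn f (map (tsubst s) ts) end.

Definition asubst (s : subst) (a : atom) : atom :=
  Atom (apred a) (map (tsubst s) (aargs a)).

Definition renaming (xi : subst) : Prop :=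
  exists f : nat -> nat, bijective f /\ forall x, xi x = Var (f x).

Definition unifier (th : subst) (a b : atom) : Prop := asubst th a = asubst th b.

Definition mgu (th : subst) (a b : atom) : Prop :=
  unifier th a b /\
  forall s, unifier s a b -> exists d : subst, forall x, s x = tsubst d (th x).

Definition idempotent (th : subst) : Prop :=
  forall x, tsubst th (th x) = th x.

Definition relevant (th : subst) (a b : atom) : Prop :=
  forall x, th x <> Var x ->
    x \in avars a ++ avars b /\
    forall y, y \in tvars (th x) -> y \in avars a ++ avars b.

Definition shifting (pi : rat -> rat) : Prop :=
  (forall x y : rat, x < y -> pi x < pi y) /\ (forall y, exists x, pi x = y).

(* p-atoms and p-goals: a p-goal is a finite set of p-atoms with pairwise
   distinct priorities, represented as the list of its elements ordered by
   strictly increasing priority (so set equality = list equality). *)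
Definition patom := (atom * rat)%type.
Definition pgoal := seq patom.

Definition is_pgoal (G : pgoal) : Prop :=
  sorted (fun x y : patom => x.2 < y.2) G.

Definition prios (G : pgoal) : seq rat := map snd G.

Definition gvars (G : pgoal) : seq nat := flatten (map (fun p => avars p.1) G).

Definition gsubst (s : subst) (G : pgoal) : pgoal :=
  map (fun p => (asubst s p.1, p.2)) G.

Definition gshift (pi : rat -> rat) (G : pgoal) : pgoal :=
  map (fun p => (p.1, pi p.2)) G.

Definition pdisj (F G : pgoal) : Prop :=
  forall p, p \in prios F -> p \notin prios G.

Definition plt (F G : pgoal) : Prop :=
  forall p q, p \in prios F -> q \in prios G -> p < q.

(* F + G (used only when F and G share no priority): the union, as a
   priority-sorted list *)
Definition padd (F G : pgoal) : pgoal :=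
  sort (fun x y : patom => x.2 <= y.2) (F ++ G).

Definition clause := (atom * pgoal)%type.

(* a step  a|F --c xi, th--> R  (the shifting is not part of the step) *)
Record step := Step {
  st_goal : pgoal;
  st_clause : clause;
  st_ren : subst;
  st_mgu : subst;
  st_res : pgoal }.

Definition step_via (s : step) (pi : rat -> rat) : Prop :=
  let h := (st_clause s).1 in
  let B := (st_clause s).2 in
  let xi := st_ren s in
  let th := st_mgu s in
  is_pgoal (st_goal s) /\ is_pgoal B /\ shifting pi /\ renaming xi /\
  exists a F, st_goal s = a :: F /\
    (forall x, x \in gvars (st_goal s) ->
       x \notin avars (asubst xi h) ++ gvars (gsubst xi B)) /\
    idempotent th /\ mgu th a.1 (asubst xi h) /\ relevant th a.1 (asubst xi h) /\
    pdisj F (gshift pi (gsubst xi B)) /\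
    st_res s = gsubst th (padd F (gshift pi (gsubst xi B))).

Definition is_step (s : step) : Prop := exists pi, step_via s pi.

(* the shape part of "s2 is a lowering of s1 by X", with witnesses
   lambda, sigma, and the decomposition a|K of the goal of s1 *)
Definition lowering_by (s2 s1 : step) (X : pgoal)
    (lam : subst) (sig : rat -> rat) (a : patom) (K : pgoal) : Prop :=
  st_clause s2 = st_clause s1 /\ shifting sig /\ is_pgoal X /\
  st_goal s1 = a :: K /\
  pdisj (gshift sig (gsubst lam K)) X /\
  (forall q, q \in prios X -> sig a.2 < q) /\
  st_goal s2 = (asubst lam a.1, sig a.2) :: padd (gshift sig (gsubst lam K)) X.

Definition lowering (s2 s1 : step) (X : pgoal) : Prop :=
  is_step s1 /\ is_step s2 /\ exists lam sig a K, lowering_by s2 s1 X lam sig a K.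

Definition cong_lowering (s2 s1 : step) (X : pgoal) : Prop :=
  exists lam sig a K th1 th2 rho,
    lowering_by s2 s1 X lam sig a K /\
    step_via s1 th1 /\ step_via s2 th2 /\ shifting rho /\
    gshift rho K = gshift sig K /\
    gshift rho (gshift th1 (st_clause s1).2) = gshift th2 (st_clause s1).2.

Definition cong_each_other (s1 s2 : step) : Prop :=
  (exists X, cong_lowering s1 s2 X) /\ (exists X, cong_lowering s2 s1 X).

Definition complete (S : step -> Prop) : Prop :=
  (forall G c, (exists s, is_step s /\ st_goal s = G /\ st_clause s = c) ->
      exists s, S s /\ st_goal s = G /\ st_clause s = c) /\
  (forall s s', is_step s -> S s' -> cong_each_other s s' -> S s).

Definition spec_independent (S : step -> Prop) : Prop :=
  forall s1 s2 X, S s1 -> S s2 -> lowering s2 s1 X -> cong_lowering s2 s1 X.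

Definition sched_rule (S : step -> Prop) : Prop :=
  (forall s, S s -> is_step s) /\ complete S /\ spec_independent S.

Definition stack_queue (S : step -> Prop) : Prop :=
  forall (h : atom) (B : pgoal), is_pgoal B ->
  exists Ms Mq : pgoal,
    is_pgoal Ms /\ is_pgoal Mq /\ plt Ms Mq /\ B = Ms ++ Mq /\
    forall s, S s -> st_clause s = (h, B) ->
      exists a K gam, st_goal s = a :: K /\ shifting gam /\
        let Ms' := gshift gam (gsubst (st_ren s) Ms) in
        let Mq' := gshift gam (gsubst (st_ren s) Mq) in
        plt Ms' K /\ plt K Mq' /\ plt Ms' Mq' /\
        st_res s = gsubst (st_mgu s) (Ms' ++ K ++ Mq').

End Syntax.

From Pilot Require Import Defs.
From Stdlib Require List.
From mathcomp Require Import all_boot all_order all_algebra.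
From mathcomp Require Import lra zify.
Set Implicit Arguments. Unset Strict Implicit. Unset Printing Implicit Defensive.
Import Order.TTheory GRing.Theory Num.Theory.
Local Open Scope ring_scope.

(* By completeness, [S] contains a step [s0] on the probe
   goal [P(X1,...,Xn)[0] | m[1]], where [P(X1,...,Xn)] is a most general atom
   unifying with the head and [m] is a ground marker atom; its shifting [p0]
   splits [B] into the atoms placed before the marker (the stack part) and those
   placed after it (the queue part).
   Given any step [s] of [S] on a goal [a[p] | K], insert the marker into that
   goal at a priority [r > p] below, or above, all of [K]. The step [t] of [S] on
   the new goal is a lowering of [s] by the marker and a lowering of [s0] by [K];
   specialisation independence makes both lowerings congruent, and congruent
   lowerings preserve the relative order of the shifted body and the surrounding
   atoms. Comparing through [t] shows that [s] puts the stack part of [B] before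
   all of [K] and the queue part after it. *)

Section ListIn.
Variable T : Type.
Implicit Types (s : seq T) (x : T).

Lemma In_mem (U : eqType) (y : U) (l : seq U) : List.In y l <-> y \in l.
Proof.
elim: l => [|z l IH] //=; rewrite in_cons IH; split.
- by case=> [->|->]; rewrite ?eqxx ?orbT.
- by case/orP=> [/eqP->|]; [left|right].
Qed.

Lemma In_map_eq (U : Type) (f g : T -> U) s x :
  map f s = map g s -> List.In x s -> f x = g x.
Proof. by elim: s => [|y s IH] //= [e1 e2] [<-|Hx] //; apply: IH. Qed.

Lemma eq_map_In (U : Type) (f g : T -> U) s :
  (forall x, List.In x s -> f x = g x) -> map f s = map g s.
Proof.
elim: s => [|y s IH] //= E; rewrite E; last by left.
by rewrite IH // => x Hx; apply: E; right.
Qed.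

Lemma map_f_In (U : eqType) (f : T -> U) s x : List.In x s -> f x \in map f s.
Proof. by move=> /(List.in_map f) /In_mem. Qed.

Lemma mem_map_In (U : eqType) (f : T -> U) s y :
  y \in map f s -> exists x, List.In x s /\ f x = y.
Proof. by move/In_mem/List.in_map_iff => [x [<- Hx]]; exists x. Qed.

Lemma In_all (p : pred T) s : (forall x, List.In x s -> p x) -> all p s.
Proof.
elim: s => [|y s IH] //= H; rewrite H ?IH //; last by left.
by move=> x Hx; apply: H; right.
Qed.

Lemma In_nth x0 s i : (i < size s)%N -> List.In (nth x0 s i) s.
Proof. by elim: s i => [|y s IH] [|i] //= Hi; [left|right; apply: IH]. Qed.

Lemma In_nthP s x : List.In x s -> exists2 i, (i < size s)%N & nth x s i = x.
Proof.
elim: s => [|y s IH] //= [<-|/IH [i Hi Hn]]; first by exists 0%N.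
by exists i.+1.
Qed.

Lemma In_sort (r : rel T) s x : List.In x (sort r s) <-> List.In x s.
Proof.
case: (perm_iota_sort r x s) => ix Hp ->; split.
- case/List.in_map_iff => i [<- /In_mem Hi]; apply: In_nth.
  by rewrite (perm_mem Hp) mem_iota add0n in Hi.
- case/In_nthP => i Hi Hn; apply/List.in_map_iff; exists i; split=> //.
  by apply/In_mem; rewrite (perm_mem Hp) mem_iota.
Qed.

Lemma mem_flatten_mapP (f : T -> seq nat) s n :
  n \in flatten (map f s) <-> exists2 x, List.In x s & n \in f x.
Proof.
elim: s => [|y s IH] /=; first by split=> // [[]].
rewrite mem_cat; split.
- by case/orP=> [Hy|/IH [x Hx Hn]]; [exists y; first left|exists x; first right].
- by case=> x [<- ->|Hx Hn] //; apply/orP; right; apply/IH; exists x.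
Qed.

End ListIn.

Lemma sorted_cat_rel (T : eqType) (r : rel T) (s1 s2 : seq T) : transitive r ->
  sorted r s1 -> sorted r s2 -> {in s1 & s2, forall x y, r x y} ->
  sorted r (s1 ++ s2).
Proof.
move=> Hr; rewrite !(sorted_pairwise Hr) pairwise_cat => -> -> H.
by rewrite !andbT; apply/allrelP.
Qed.

Lemma leq_sumn (s : seq nat) n : n \in s -> (n <= sumn s)%N.
Proof.
elim: s => [|m s IH] //=; rewrite in_cons => /orP[/eqP->|/IH H].
- exact: leq_addr.
- exact: leq_trans H (leq_addl _ _).
Qed.

Lemma exists_above (R : realDomainType) (p : R) (s : seq R) :
  exists2 r, p < r & {in s, forall q, q < r}.
Proof.
elim: s => [|q s [r Hpr Hs]]; first by exists (p + 1); rewrite ?ltrDl.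
exists (Num.max r (q + 1)); first by rewrite lt_max Hpr.
move=> x; rewrite in_cons => /orP[/eqP->|/Hs Hx]; rewrite lt_max.
- by rewrite ltrDl ltr01 orbT.
- by rewrite Hx.
Qed.

Lemma exists_between (R : realFieldType) (p : R) (s : seq R) : {in s, forall q, p < q} ->
  exists2 r, p < r & {in s, forall q, r < q}.
Proof.
elim: s => [|q s IH] Hs; first by exists (p + 1); rewrite ?ltrDl.
have Hpq : p < q by apply: Hs; rewrite mem_head.
have [r Hpr Hr] := IH (fun x Hx => Hs x (mem_behead (Hx : x \in behead (q :: s)))).
exists (Num.min r ((p + q) / 2)); first by rewrite lt_min Hpr /=; lra.
move=> x; rewrite in_cons => /orP[/eqP->|/Hr Hx]; rewrite gt_min.
- by apply/orP; right; lra.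
- by rewrite Hx.
Qed.

Lemma shifting_affine (p d : rat) : 0 < d -> shifting (fun x => p + d * x).
Proof.
move=> Hd; split; first by move=> x y H; rewrite ltrD2l ltr_pM2l.
move=> y; exists ((y - p) / d); rewrite mulrC -mulrA mulVf ?mulr1 ?subrKC //.
by rewrite gt_eqF.
Qed.

Lemma shifting_lt f x y : shifting f -> (f x < f y) = (x < y).
Proof. by case=> Hf _; rewrite !ltNge (le_mono Hf). Qed.

Section Pgoals.
Variables Fsym Psym : Type.
Local Notation term := (term Fsym).
Local Notation atom := (atom Fsym Psym).
Local Notation patom := (patom Fsym Psym).
Local Notation pgoal := (pgoal Fsym Psym).
Local Notation In := List.In.
Local Notation V := (@Var Fsym).
Implicit Types (F G K X : pgoal).

Definition term_nested_ind (P : term -> Prop) (HV : forall x, P (V x))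
  (HF : forall f ts, (forall t, In t ts -> P t) -> P (Fn f ts)) : forall t, P t :=
  fix F t := match t with
  | Var x => HV x
  | Fn f ts => HF f ts
      ((fix G ts : forall t, In t ts -> P t :=
          match ts with
          | [::] => fun t H => False_ind _ H
          | u :: us => fun t H => match H with
                 | or_introl e => eq_ind u P (F u) t e
                 | or_intror H' => G us t H' end end) ts)
  end.

Lemma tsubst_id_on (s : subst Fsym) t :
  (forall x, x \in tvars t -> s x = V x) -> tsubst s t = t.
Proof.
elim/term_nested_ind: t => [x|f ts IH] H /=; first by apply: H; rewrite inE.
congr (Fn f _); rewrite -[RHS]map_id; apply: eq_map_In => t Ht.
by apply: IH => // x Hx; apply: H; apply/mem_flatten_mapP; exists t.
Qed.

Lemma asubst_id_on (s : subst Fsym) (a : atom) :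
  (forall x, x \in avars a -> s x = V x) -> asubst s a = a.
Proof.
case: a => P args H; rewrite /asubst /=; congr (Atom P _).
rewrite -[RHS]map_id; apply: eq_map_In => t Ht; apply: tsubst_id_on => x Hx.
by apply: H; apply/mem_flatten_mapP; exists t.
Qed.

Lemma asubst_Var (a : atom) : asubst V a = a.
Proof. exact: asubst_id_on. Qed.

Lemma gsubst_Var G : gsubst V G = G.
Proof. by elim: G => //= [[a p] G ->]; rewrite asubst_Var. Qed.

Lemma gshift_id G : gshift id G = G.
Proof. by elim: G => //= [[a p] G ->]. Qed.

Lemma gshift_comp f g G : gshift f (gshift g G) = gshift (f \o g) G.
Proof. by elim: G => //= x G ->. Qed.

Lemma In_gshift_gsubst (lam : subst Fsym) sig K x :
  In x K -> In (asubst lam x.1, sig x.2) (gshift sig (gsubst lam K)).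
Proof. by elim: K => [|y K IH] //= [->|/IH]; [left|right]. Qed.

Lemma gvarsP G x : x \in gvars G <-> exists2 p, In p G & x \in avars p.1.
Proof. exact: mem_flatten_mapP. Qed.

Lemma prios_gshift f G : prios (gshift f G) = map f (prios G).
Proof. by elim: G => //= x G ->. Qed.

Lemma prios_gsubst s G : prios (gsubst s G) = prios G.
Proof. by elim: G => //= x G ->. Qed.

Lemma prios_filter (P : pred rat) G :
  prios (filter (fun x => P x.2) G) = filter P (prios G).
Proof. by elim: G => //= x G IH; case: (P x.2); rewrite /= IH. Qed.

Lemma is_pgoalE G : is_pgoal G = sorted <%R (prios G).
Proof. by rewrite /is_pgoal /prios sorted_map. Qed.

Lemma is_pgoal_gsubst s G : is_pgoal (gsubst s G) = is_pgoal G.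
Proof. by rewrite !is_pgoalE prios_gsubst. Qed.

Lemma is_pgoal_gshift f G : shifting f -> is_pgoal G -> is_pgoal (gshift f G).
Proof.
case=> Hf _; rewrite !is_pgoalE prios_gshift.
by apply: homo_sorted => x y; apply: Hf.
Qed.

Lemma is_pgoal_cat F G : is_pgoal F -> is_pgoal G -> plt F G -> is_pgoal (F ++ G).
Proof.
rewrite !is_pgoalE /prios map_cat => HF HG HFG.
by apply: sorted_cat_rel => //; apply: lt_trans.
Qed.

Lemma mem_prios_padd F G q : (q \in prios (padd F G)) = (q \in prios (F ++ G)).
Proof. by rewrite /padd /prios -sort_map mem_sort. Qed.

Lemma is_pgoal_consI (x : patom) G : is_pgoal G ->
  (forall y, In y G -> x.2 < y.2) -> is_pgoal (x :: G).
Proof.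
move=> HG Hx; rewrite /is_pgoal /= path_sortedE; last by move=> ? ? ?; apply: lt_trans.
by rewrite HG andbT; apply: In_all.
Qed.

Lemma pgoal_head_lt (x : patom) G y : is_pgoal (x :: G) -> In y G -> x.2 < y.2.
Proof.
have Ht : transitive (fun x y : patom => x.2 < y.2) by move=> ? ? ?; apply: lt_trans.
rewrite /is_pgoal /= => /(order_path_min Ht).
by elim: G => [|z G IH] //= /andP[Hz /IH{}IH] [<-|/IH].
Qed.

Lemma pgoal_tail (x : patom) G : is_pgoal (x :: G) ->
  is_pgoal G /\ {in prios G, forall q, x.2 < q}.
Proof.
move=> HG; split; first exact: path_sorted HG.
by move=> q /mem_map_In [y [Hy <-]]; apply: pgoal_head_lt HG Hy.
Qed.

Lemma pgoal_eq_In F G : is_pgoal F -> is_pgoal G ->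
  (forall x, In x F <-> In x G) -> F = G.
Proof.
elim: F G => [|x F IH] [|y G] // HF HG E.
- by case: (proj2 (E y) (or_introl erefl)).
- by case: (proj1 (E x) (or_introl erefl)).
have [Hyx|Hx] := proj1 (E x) (or_introl erefl).
- subst y; congr (_ :: _); apply: IH; [exact: path_sorted HF|exact: path_sorted HG|].
  move=> z; split=> Hz.
  + case: (proj1 (E z) (or_intror Hz)) => // ez; subst z.
    by have := pgoal_head_lt HF Hz; rewrite ltxx.
  + case: (proj2 (E z) (or_intror Hz)) => // ez; subst z.
    by have := pgoal_head_lt HG Hz; rewrite ltxx.
- have Hyx := pgoal_head_lt HG Hx.
  case: (proj2 (E y) (or_introl erefl)) => [exy|Hy].
  + by subst y; rewrite ltxx in Hyx.
  + by have := lt_trans (pgoal_head_lt HF Hy) Hyx; rewrite ltxx.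
Qed.

Lemma pdisj_sym F G : pdisj F G -> pdisj G F.
Proof. by move=> D p HG; apply/negP => /D; rewrite HG. Qed.

Lemma uniq_prios_cat F G : is_pgoal F -> is_pgoal G -> pdisj F G ->
  uniq (prios (F ++ G)).
Proof.
rewrite !is_pgoalE !lt_sorted_uniq_le => /andP[UF _] /andP[UG _] D.
rewrite /prios map_cat cat_uniq -!/(prios _) UF UG andbT /=.
by apply/hasPn => p HG; apply/negP => /D; rewrite HG.
Qed.

Lemma In_padd F G x : In x (padd F G) <-> In x (F ++ G).
Proof. exact: In_sort. Qed.

Lemma is_pgoal_padd F G : is_pgoal F -> is_pgoal G -> pdisj F G ->
  is_pgoal (padd F G).
Proof.
move=> HF HG D; rewrite is_pgoalE /padd /prios -sort_map -/(prios _).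
rewrite lt_sorted_uniq_le sort_uniq uniq_prios_cat //=.
by apply: sort_sorted; apply: le_total.
Qed.

Lemma padd_eq F G L : is_pgoal F -> is_pgoal G -> pdisj F G -> is_pgoal L ->
  (forall x, In x L <-> In x (F ++ G)) -> padd F G = L.
Proof.
move=> HF HG D HL E; apply: pgoal_eq_In => //; first exact: is_pgoal_padd.
by move=> x; rewrite In_padd E.
Qed.

Lemma padd_comm F G : is_pgoal F -> is_pgoal G -> pdisj F G -> padd F G = padd G F.
Proof.
move=> HF HG D; apply: padd_eq => //; first exact: is_pgoal_padd (pdisj_sym D).
by move=> x; have := In_padd G F x; rewrite !List.in_app_iff; tauto.
Qed.

Lemma padd_between K M1 M2 : is_pgoal K -> is_pgoal M1 -> is_pgoal M2 ->
  plt M1 K -> plt K M2 -> plt M1 M2 -> padd K (M1 ++ M2) = M1 ++ K ++ M2.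
Proof.
move=> HK H1 H2 H1K HK2 H12.
have H1K2 : plt (M1 ++ K) M2.
  move=> p q; rewrite /prios map_cat mem_cat -!/(prios _) => /orP[Hp|Hp] Hq.
  - exact: H12.
  - exact: HK2.
apply: padd_eq => //; first exact: is_pgoal_cat.
- move=> p Hp; rewrite /prios map_cat mem_cat -!/(prios _).
  apply/negP => /orP[Hp1|Hp2].
  - by have := H1K _ _ Hp1 Hp; rewrite ltxx.
  - by have := HK2 _ _ Hp Hp2; rewrite ltxx.
- by rewrite catA; apply: is_pgoal_cat => //; apply: is_pgoal_cat.
- by move=> x; rewrite !List.in_app_iff; tauto.
Qed.

Lemma pgoal_split (P : pred rat) G : is_pgoal G ->
  (forall x y, In x G -> In y G -> x.2 < y.2 -> P y.2 -> P x.2) ->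
  G = filter (fun x => P x.2) G ++ filter (fun x => ~~ P x.2) G.
Proof.
elim: G => [|x G IH] //= HG Hdown.
case Px: (P x.2) => /=.
  congr (_ :: _); apply: IH; first exact: path_sorted HG.
  by move=> y z Hy Hz; apply: Hdown; right.
have notP : all (fun y => ~~ P y.2) G.
  apply: In_all => y Hy; apply/negP => Py.
  have := Hdown x y (or_introl erefl) (or_intror Hy) (pgoal_head_lt HG Hy) Py.
  by rewrite Px.
have -> : filter (fun y => P y.2) G = [::].
  rewrite -(all_filterP notP) -filter_predI (@eq_filter _ _ pred0) ?filter_pred0 //.
  by move=> y /=; rewrite andbN.
by rewrite (all_filterP notP).
Qed.

End Pgoals.

Section Steps.
Variables Fsym Psym : Type.
Local Notation atom := (atom Fsym Psym).
Local Notation pgoal := (pgoal Fsym Psym).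
Local Notation step := (step Fsym Psym).
Local Notation In := List.In.
Local Notation V := (@Var Fsym).
Implicit Types (F G K X : pgoal) (s t : step).

Lemma step_via_res s p a F : step_via s p -> st_goal s = a :: F ->
  pdisj F (gshift p (gsubst (st_ren s) (st_clause s).2)) /\
  st_res s = gsubst (st_mgu s) (padd F (gshift p (gsubst (st_ren s) (st_clause s).2))).
Proof.
move=> [_ [_ [_ [_ [a' [F' [E [_ [_ [_ [_ [H1 H2]]]]]]]]]]]] E'.
by rewrite E' in E; case: E => _ EF; subst F'.
Qed.

Lemma step_via_prio_neq s p a F b x : step_via s p -> st_goal s = a :: F ->
  b \in prios (st_clause s).2 -> In x F -> p b != x.2.
Proof.
move=> Vs EG Hb Hx; have [D _] := step_via_res Vs EG.
apply/eqP => E; have := D _ (map_f_In snd Hx).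
by rewrite -E prios_gshift prios_gsubst map_f.
Qed.

Lemma step_via_cons s p : step_via s p -> exists a K, st_goal s = a :: K.
Proof. by move=> [_ [_ [_ [_ [a [K [EG _]]]]]]]; exists a, K. Qed.

Lemma unifier_shape (th : subst Fsym) (a b : atom) : unifier th a b ->
  apred a = apred b /\ size (aargs a) = size (aargs b).
Proof.
move=> E; split; first by have := congr1 (@apred _ _) E.
by have := congr1 (fun c => size (aargs c)) E; rewrite /= !size_map.
Qed.

Lemma step_via_head_shape s p a F : step_via s p -> st_goal s = a :: F ->
  apred a.1 = apred (st_clause s).1 /\ size (aargs a.1) = size (aargs (st_clause s).1).
Proof.
move=> [_ [_ [_ [_ [a' [F' [EG' [_ [_ [[Hu _] _]]]]]]]]]] EG.
rewrite EG in EG'; case: EG' => Ea _; subst a'.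
by have [-> ->] := unifier_shape Hu; rewrite /= size_map.
Qed.

(* The result of a step lists the shifted body among the old goal, so it
   determines the shifting on the priorities of the body. *)
Lemma step_via_shift_eq s p1 p2 : step_via s p1 -> step_via s p2 ->
  {in prios (st_clause s).2, p1 =1 p2}.
Proof.
move=> V1 V2; have [_ [HB [Sh1 _]]] := V1; have [_ [_ [Sh2 _]]] := V2.
have [a [F [EG _]]] := V1.2.2.2.2.
have [D1 R1] := step_via_res V1 EG; have [D2 R2] := step_via_res V2 EG.
set B := (st_clause s).2 in D1 R1 D2 R2 HB *.
have E : sort <=%R (prios F ++ map p1 (prios B)) =
         sort <=%R (prios F ++ map p2 (prios B)).
  have := congr1 (@prios _ _) (etrans (esym R1) R2).
  by rewrite !prios_gsubst /padd /prios -!sort_map !map_cat -!/(prios _)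
     !prios_gshift !prios_gsubst.
have notF p : pdisj F (gshift p (gsubst (st_ren s) B)) ->
    forall y, y \in map p (prios B) -> y \notin prios F.
  by move=> D y Hy; apply/negP => /D; rewrite prios_gshift prios_gsubst Hy.
apply/eq_in_map; apply: (irr_sorted_eq (@lt_trans _ _) (@ltxx _ _)).
- by move: HB; rewrite is_pgoalE; apply: homo_sorted; apply: Sh1.1.
- by move: HB; rewrite is_pgoalE; apply: homo_sorted; apply: Sh2.1.
move=> y; have Ey := congr1 (fun l => y \in l) E; rewrite /= !mem_sort !mem_cat in Ey.
apply/idP/idP => Hy.
- by move: Ey; rewrite Hy (negbTE (notF _ D1 y Hy)) orbT /= => <-.
- by move: Ey; rewrite Hy (negbTE (notF _ D2 y Hy)) orbT /= => ->.
Qed.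

(* [q] is the priority that the lowering gives to [x] in the goal of [s2]. *)
Lemma cong_lowering_lt s1 s2 X p1 p2 a K x :
  cong_lowering s2 s1 X -> step_via s1 p1 -> step_via s2 p2 ->
  st_goal s1 = a :: K -> In x K ->
  exists q, [/\ q \in prios (behead (st_goal s2)), q \notin prios X &
    forall b, b \in prios (st_clause s1).2 -> (p1 b < x.2 <-> p2 b < q)].
Proof.
move=> [lam [sig [a' [K' [sh1 [sh2 [rho [Low [V1 [V2 [Shr [EK EB]]]]]]]]]]]].
move=> W1 W2 EG Hx; have [Ecl [_ [_ [EG1 [Pd [_ EG2]]]]]] := Low.
rewrite EG in EG1; case: EG1 => _ EK'; subst K'.
have Hx' := In_gshift_gsubst lam sig Hx.
exists (sig x.2); split.
- rewrite EG2; apply: (map_f_In snd (x := (asubst lam x.1, sig x.2))).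
  by apply/In_padd/List.in_or_app; left.
- exact/Pd/(map_f_In snd Hx').
move=> b Hb.
have e1 := step_via_shift_eq V1 W1 Hb.
have e2 : sh2 b = p2 b by apply: (step_via_shift_eq V2 W2); rewrite Ecl.
have e3 : rho x.2 = sig x.2 by have := In_map_eq EK Hx => /(congr1 snd).
have e4 : rho (sh1 b) = sh2 b.
  have [z [Hz <-]] := mem_map_In Hb; rewrite gshift_comp in EB.
  by have := In_map_eq EB Hz => /(congr1 snd).
by rewrite -e1 -e2 -e4 -e3 shifting_lt.
Qed.

Lemma step_exists G (h : atom) B (xi th : subst Fsym) a F :
  is_pgoal G -> is_pgoal B -> renaming xi -> G = a :: F ->
  (forall x, x \in gvars G -> x \notin avars (asubst xi h) ++ gvars (gsubst xi B)) ->
  Defs.idempotent th -> mgu th a.1 (asubst xi h) -> relevant th a.1 (asubst xi h) ->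
  exists s, is_step s /\ st_goal s = G /\ st_clause s = (h, B).
Proof.
move=> HG HB Hxi EG Hd Hid Hmgu Hrel.
have [M1 _ HM1] := exists_above 0 (prios F).
have [M2 _ HM2] := exists_above 0 (map -%R (prios B)).
pose pi x : rat := (M1 + M2) + 1 * x.
exists (Step G (h, B) xi th (gsubst th (padd F (gshift pi (gsubst xi B))))).
split=> //; exists pi; do 2!split=> //.
split; first exact: (shifting_affine (M1 + M2) ltr01).
split=> //; exists a, F; do 6!split=> //.
move=> y /HM1 Hy; rewrite prios_gshift prios_gsubst; apply/negP => /mapP [b Hb Eb].
have := HM2 _ (map_f -%R Hb); rewrite /pi in Eb; lra.
Qed.

Lemma is_step_regoal s p a F G : step_via s p -> st_goal s = a :: F ->
  is_pgoal (a :: G) -> {subset gvars G <= gvars F} ->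
  exists t, is_step t /\ st_goal t = a :: G /\ st_clause t = st_clause s.
Proof.
move=> [_ [HB [_ [Hxi [a' [F' [EG' [Hd [Hid [Hmgu [Hrel _]]]]]]]]]]] EG HG HGF.
rewrite EG in EG' Hd; case: EG' => Ea _; subst a'.
case: (st_clause s) HB Hd Hmgu Hrel => h B HB Hd Hmgu Hrel.
apply: (step_exists (xi := st_ren s) (th := st_mgu s)) => // x.
by rewrite /gvars /= -!/(gvars _) mem_cat => /orP[Hx|/HGF Hx]; apply: Hd;
   rewrite /gvars /= -!/(gvars _) mem_cat Hx ?orbT.
Qed.

Lemma lowering_id s1 s2 a K X :
  is_step s1 -> is_step s2 -> st_clause s2 = st_clause s1 ->
  st_goal s1 = a :: K -> is_pgoal X -> pdisj K X ->
  {in prios X, forall q, a.2 < q} -> st_goal s2 = a :: padd K X ->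
  lowering s2 s1 X.
Proof.
move=> H1 H2 Ec E1 HX Hd Hlt E2; do 2!split=> //.
exists V, id, a, K; split=> //; split; first by split=> // y; exists y.
rewrite gsubst_Var gshift_id E2 asubst_Var; do 4!split=> //.
by case: a {E1 E2 Hlt}.
Qed.

End Steps.

Section Probe.
Variables Fsym Psym : Type.
Local Notation term := (term Fsym).
Local Notation atom := (atom Fsym Psym).
Local Notation pgoal := (pgoal Fsym Psym).
Local Notation step := (step Fsym Psym).
Local Notation V := (@Var Fsym).

Definition inst (N : nat) (args : seq term) : subst Fsym :=
  fun x => if (N <= x < N + size args)%N then nth (V 0) args (x - N) else V x.

Lemma avars_Vars P (l : seq nat) : avars (Atom P (map V l) : atom) = l.
Proof. by rewrite /avars /=; elim: l => //= x l ->. Qed.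

Lemma asubst_inst N P (args : seq term) :
  asubst (inst N args) (Atom P (map V (iota N (size args))) : atom) = Atom P args.
Proof.
rewrite /asubst /=; congr (Atom P _); rewrite -map_comp.
transitivity (map (fun i => nth (V 0) args (i - N)) (iota N (size args))).
  by apply/eq_in_map => i; rewrite mem_iota /= /inst => ->.
rewrite -[N in iota N]addn0 iotaDl -map_comp -[RHS](mkseq_nth (V 0)).
by apply: eq_map => i /=; rewrite addKn.
Qed.

Lemma inst_mgu (h : atom) N : {in avars h, forall x, (x < N)%N} ->
  let th := inst N (aargs h) in
  let g := Atom (apred h) (map V (iota N (size (aargs h)))) in
  [/\ Defs.idempotent th, mgu th g h & relevant th g h].
Proof.
move=> HN th g.
have Hv i y : (i < size (aargs h))%N ->
    y \in tvars (nth (V 0) (aargs h) i) -> y \in avars h.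
  move=> Hi Hy; apply/mem_flatten_mapP.
  by exists (nth (V 0) (aargs h) i); first exact: In_nth.
have Hout y : y \in avars h -> th y = V y.
  move=> Hy; rewrite /th /inst; have := HN y Hy.
  by case: ifP => // /andP[H1 _] H2; lia.
split; [|split|].
- move=> x; rewrite /th /inst; case: ifP => Hx; last by rewrite /= /inst Hx.
  apply: tsubst_id_on => y Hy; apply: Hout; apply: (Hv (x - N)%N) => //.
  by move/andP: Hx => [H1 H2]; lia.
- by rewrite /unifier asubst_inst asubst_id_on //; case: (h).
- move=> s Hs; exists s => x; rewrite /th /inst; case: ifP => Hx //.
  have [HNx Hi] : (N <= x)%N /\ (x - N < size (aargs h))%N.
    by move/andP: Hx => [H1 H2]; split; lia.
  case: Hs => /(congr1 (fun l => nth (V 0) l (x - N))).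
  rewrite !(nth_map (V 0)) ?size_map ?size_iota // (nth_map 0%N) ?size_iota //.
  by rewrite nth_iota // subnKC.
- move=> x; rewrite /th /inst; case: ifP => Hx // _; split.
  + by rewrite mem_cat avars_Vars mem_iota Hx.
  + move=> y Hy; rewrite mem_cat; apply/orP; right; apply: (Hv (x - N)%N) => //.
    by move/andP: Hx => [H1 H2]; lia.
Qed.

Variables (h : atom) (B : pgoal).

Definition fresh_var : nat := (sumn (avars h ++ gvars B)).+1.

Definition gen_head : atom := Atom (apred h) (map V (iota fresh_var (size (aargs h)))).

Definition marker : atom := Atom (apred h) [::].

Definition probe_goal : pgoal := [:: (gen_head, 0); (marker, 1)].

Lemma fresh_varP x : x \in avars h ++ gvars B -> (x < fresh_var)%N.
Proof. by move=> Hx; rewrite ltnS leq_sumn. Qed.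

Lemma probe_step : is_pgoal B ->
  exists s0, is_step s0 /\ st_goal s0 = probe_goal /\ st_clause s0 = (h, B).
Proof.
move=> HB; have [|Hid Hmgu Hrel] := @inst_mgu h fresh_var.
  by move=> x Hx; apply: fresh_varP; rewrite mem_cat Hx.
apply: (step_exists (xi := V) (th := inst fresh_var (aargs h))
  (a := (gen_head, 0)) (F := [:: (marker, 1)])); rewrite ?asubst_Var //.
- by exists id; split=> //; exists id.
- rewrite gsubst_Var /gvars /= cats0 avars_Vars => x; rewrite mem_iota => /andP[Hx _].
  by apply/negP => /fresh_varP; lia.
Qed.

Lemma lowering_probe (s0 t : step) (a1 : atom) (pa r : rat) K :
  is_step s0 -> is_step t -> st_clause t = st_clause s0 -> st_goal s0 = probe_goal ->
  apred a1 = apred h -> size (aargs a1) = size (aargs h) ->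
  pa < r -> is_pgoal K -> r \notin prios K -> {in prios K, forall q, pa < q} ->
  st_goal t = (a1, pa) :: padd [:: (marker, r)] K ->
  lowering t s0 K.
Proof.
move=> H0 Ht Ec E0 Ep Es Hpr HK Hr HKp Et; do 2!split=> //.
pose sig x := pa + (r - pa) * x.
exists (inst fresh_var (aargs a1)), sig, (gen_head, 0), [:: (marker, 1)].
have sig1 : sig 1 = r by rewrite /sig mulr1 addrC subrK.
have sig0 : sig 0 = pa by rewrite /sig mulr0 addr0.
split=> //; split; first by apply: shifting_affine; rewrite subr_gt0.
do 2!split=> //; split; first by move=> y; rewrite /= sig1 inE => /eqP ->.
split; first by move=> q Hq /=; rewrite sig0; apply: HKp.
by rewrite Et /= sig1 sig0 /gen_head -Es -Ep asubst_inst; case: (a1).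
Qed.

End Probe.

Section StackQueue.
Variables (Fsym Psym : Type) (S : step Fsym Psym -> Prop).
Local Notation atom := (atom Fsym Psym).
Local Notation pgoal := (pgoal Fsym Psym).
Local Notation step := (step Fsym Psym).
Local Notation In := List.In.

Hypothesis schedS : sched_rule S.
Variables (h : atom) (B : pgoal).
Hypothesis pgoalB : is_pgoal B.
Variables (s0 : step) (p0 : rat -> rat).
Hypotheses (S_s0 : S s0) (goal_s0 : st_goal s0 = probe_goal h B)
  (clause_s0 : st_clause s0 = (h, B)) (via_s0 : step_via s0 p0).

Lemma marker_transfer s pi a1 pa K r :
  S s -> st_clause s = (h, B) -> step_via s pi -> st_goal s = (a1, pa) :: K ->
  pa < r -> r \notin prios K ->
  exists pt, forall b, b \in prios B ->
    (p0 b < 1 <-> pt b < r) /\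
    forall x, In x K -> exists2 q, q \in prios K & (pi b < x.2 <-> pt b < q).
Proof.
move=> Ss Ecl Vs EG Hpr Hr.
have [_ [[Scomp _] SI]] := schedS.
have [HK HKp] : is_pgoal K /\ {in prios K, forall q, pa < q}.
  by apply: (pgoal_tail (x := (a1, pa))); rewrite -EG; case: Vs.
have Hm : is_pgoal [:: (marker h, r)] by [].
have Dm : pdisj K [:: (marker h, r)].
  by move=> q Hq; rewrite /= inE; apply: contraNneq Hr => <-.
have HGt : is_pgoal ((a1, pa) :: padd K [:: (marker h, r)]).
  apply: is_pgoal_consI; first exact: is_pgoal_padd.
  move=> y /In_padd /List.in_app_iff [Hy|[<-|[]]] //.
  exact/HKp/map_f_In.
have [t [St [EGt ECt]]] : exists t, S t /\
    st_goal t = (a1, pa) :: padd K [:: (marker h, r)] /\ st_clause t = (h, B).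
  apply: Scomp; rewrite -Ecl; apply: is_step_regoal Vs EG HGt _ => x.
  move=> /gvarsP [y /In_padd /List.in_app_iff [Hy|[<-|[]]] Hx] //.
  by apply/gvarsP; exists y.
have [pt Vt] := schedS.1 t St.
have [Hap Hsz] := step_via_head_shape Vs EG; rewrite Ecl in Hap Hsz.
have C1 : cong_lowering t s [:: (marker h, r)].
  apply: SI => //; apply: (lowering_id (a := (a1, pa)) (K := K)) => //.
  - by exists pi.
  - by exists pt.
  - by rewrite ECt Ecl.
  - by move=> q; rewrite inE => /eqP ->.
have C2 : cong_lowering t s0 K.
  apply: SI => //.
  apply: (lowering_probe (h := h) (B := B) (a1 := a1) (pa := pa) (r := r)) => //.
  - by exists p0.
  - by exists pt.
  - by rewrite ECt clause_s0.
  - by rewrite EGt padd_comm.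
exists pt => b Hb; split.
- have [q [Hq HqK Hbq]] := cong_lowering_lt C2 via_s0 Vt goal_s0 (or_introl erefl).
  move: Hq; rewrite EGt /= mem_prios_padd /prios map_cat mem_cat -/(prios _).
  rewrite (negbTE HqK) inE orFb => /eqP Eq; subst q.
  by apply: Hbq; rewrite clause_s0.
- move=> x Hx; have [q [Hq Hqm Hbq]] := cong_lowering_lt C1 Vs Vt EG Hx.
  exists q; last by apply: Hbq; rewrite Ecl.
  move: Hq; rewrite EGt /= mem_prios_padd /prios map_cat mem_cat -/(prios _).
  by rewrite (negbTE Hqm) orbF.
Qed.

Lemma stack_before s pi a K b x :
  S s -> st_clause s = (h, B) -> step_via s pi -> st_goal s = a :: K ->
  b \in prios B -> p0 b < 1 -> In x K -> pi b < x.2.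
Proof.
case: a => a1 pa Ss Ecl Vs EG Hb Hb1 Hx.
have [_ HKp] : is_pgoal K /\ {in prios K, forall q, pa < q}.
  by apply: (pgoal_tail (x := (a1, pa))); rewrite -EG; case: Vs.
have [r Hpr HrK] := exists_between HKp.
have Hr : r \notin prios K by apply/negP => /HrK; rewrite ltxx.
have [pt /(_ b Hb) [Hbr HbK]] := marker_transfer Ss Ecl Vs EG Hpr Hr.
have [q Hq Hbq] := HbK x Hx.
by apply/Hbq; apply: lt_trans (HrK q Hq); apply/Hbr.
Qed.

Lemma queue_after s pi a K b x :
  S s -> st_clause s = (h, B) -> step_via s pi -> st_goal s = a :: K ->
  b \in prios B -> ~~ (p0 b < 1) -> In x K -> x.2 < pi b.
Proof.
case: a => a1 pa Ss Ecl Vs EG Hb Hb1 Hx.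
have [r Hpr HrK] := exists_above pa (prios K).
have Hr : r \notin prios K by apply/negP => /HrK; rewrite ltxx.
have [pt /(_ b Hb) [Hbr HbK]] := marker_transfer Ss Ecl Vs EG Hpr Hr.
have [q Hq Hbq] := HbK x Hx.
have Hne : pi b != x.2 by apply: step_via_prio_neq Vs EG _ Hx; rewrite Ecl.
case: ltgtP Hne => // Hlt _; move/Hbq: Hlt => Hlt.
by move: Hb1; have -> : p0 b < 1 by apply/Hbr; apply: lt_trans Hlt (HrK q Hq).
Qed.

Definition stack_part : pgoal := [seq x <- B | p0 x.2 < 1].

Definition queue_part : pgoal := [seq x <- B | ~~ (p0 x.2 < 1)].

Lemma stack_queue_cat : B = stack_part ++ queue_part.
Proof.
have [_ [_ [Sh0 _]]] := via_s0.
apply: (pgoal_split (P := fun b => p0 b < 1)) => // x y _ _ Hxy.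
by apply: lt_trans; apply: Sh0.1.
Qed.

Lemma plt_stack_queue : plt stack_part queue_part.
Proof.
have [_ [_ [Sh0 _]]] := via_s0.
move=> x y; rewrite (prios_filter (fun b => p0 b < 1)).
rewrite (prios_filter (fun b => ~~ (p0 b < 1))) !mem_filter => /andP[Hx _] /andP[Hy _].
case: ltgtP => // [Hyx|Exy]; last by rewrite -Exy Hx in Hy.
by rewrite (lt_trans (Sh0.1 _ _ Hyx) Hx) in Hy.
Qed.

Lemma stack_queue_clause : exists Ms Mq : pgoal,
  is_pgoal Ms /\ is_pgoal Mq /\ plt Ms Mq /\ B = Ms ++ Mq /\
  forall s, S s -> st_clause s = (h, B) ->
    exists a K gam, st_goal s = a :: K /\ shifting gam /\
      let Ms' := gshift gam (gsubst (st_ren s) Ms) in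
      let Mq' := gshift gam (gsubst (st_ren s) Mq) in
      plt Ms' K /\ plt K Mq' /\ plt Ms' Mq' /\
      st_res s = gsubst (st_mgu s) (Ms' ++ K ++ Mq').
Proof.
have Ht : transitive (fun x y : patom Fsym Psym => x.2 < y.2).
  by move=> ? ? ?; apply: lt_trans.
have [HMs HMq] : is_pgoal stack_part /\ is_pgoal queue_part.
  by split; apply: sorted_filter.
exists stack_part, queue_part; do 3!split=> //; first exact: plt_stack_queue.
split; first exact: stack_queue_cat.
move=> s Ss Ecl; have [pi Vs] := schedS.1 s Ss.
have [a [K EG]] := step_via_cons Vs.
have [_ [_ [Shpi _]]] := Vs.
exists a, K, pi; do 2!split=> //.
move=> Ms' Mq'.
have HMsK : plt Ms' K.
  move=> p q; rewrite prios_gshift prios_gsubst (prios_filter (fun b => p0 b < 1)).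
  move=> /mapP [b]; rewrite mem_filter => /andP[Hb1 Hb] -> /mem_map_In [x [Hx <-]].
  exact: stack_before Ss Ecl Vs EG Hb Hb1 Hx.
have HKMq : plt K Mq'.
  move=> q p /mem_map_In [x [Hx <-]].
  rewrite prios_gshift prios_gsubst (prios_filter (fun b => ~~ (p0 b < 1))).
  move=> /mapP [b]; rewrite mem_filter => /andP[Hb1 Hb] ->.
  exact: queue_after Ss Ecl Vs EG Hb Hb1 Hx.
have HMsq : plt Ms' Mq'.
  move=> p q; rewrite !prios_gshift !prios_gsubst => /mapP [b Hb ->] /mapP [c Hc ->].
  by apply: Shpi.1; apply: plt_stack_queue.
do 3!split=> //.
have [HK _] : is_pgoal K /\ {in prios K, forall q, a.2 < q}.
  by apply: pgoal_tail; rewrite -EG; case: Vs.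
have [_ ->] := step_via_res Vs EG; rewrite Ecl /=.
have -> : gshift pi (gsubst (st_ren s) B) = Ms' ++ Mq'.
  by rewrite {1}stack_queue_cat /gshift /gsubst !map_cat.
by rewrite padd_between //; apply: is_pgoal_gshift; rewrite ?is_pgoal_gsubst.
Qed.

End StackQueue.

Theorem theoremt4p1p1 (Fsym Psym : Type) (S : step Fsym Psym -> Prop) :
  sched_rule S -> stack_queue S.
Proof.
move=> schedS h B HB.
have [s [Hs [EG ECl]]] := probe_step h HB.
have [s0 [S0 [EG0 ECl0]]] : exists s0, S s0 /\ st_goal s0 = probe_goal h B /\
    st_clause s0 = (h, B).
  by apply: schedS.2.1.1; exists s.
have [p0 V0] := schedS.1 s0 S0.
exact: (stack_queue_clause schedS HB S0 EG0 ECl0 V0).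
Qed.
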